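(* Let $\mathcal L$ be a finite propositional signature, $\Gamma$ a finite nonempty theory over $\mathcal L$, $\mathcal L'\supseteq\mathcal L$ a signature, and $M$ an HT-interpretation over $\mathcal L'$. Then $M\in E_s(\Gamma)$ (equivalence interpretations over $\mathcal L'$) if and only if $M|_{\mathcal L}$ is totality preserving and $M|_{\mathcal L}\models\bigvee_{\phi\in\Gamma}\bigwedge_{\psi\in\Gamma_\phi}\psi$, where $\Gamma_\phi=\{\neg\neg\psi\mid\psi\in\Gamma\}\cup\{\phi\to(\neg\neg a\to a)\mid a\in\mathcal L\}$.
   Context: A propositional signature is a set of atoms; formulas are built from atoms and $\bot$ with $\wedge,\vee,\to$; $\neg\phi$ abbreviates $\phi\to\bot$. An HT-interpretation over $\mathcal L'$ is a pair $(X,Y)$ with $X\subseteq Y\subseteq\mathcal L'$; total if $X=Y$. HT-satisfaction: $(X,Y)\models a$ iff $a\in X$; $(X,Y)\not\models\bot$; $\wedge,\vee$ componentwise; $(X,Y)\models\phi\to\psi$ iff (i) $(X,Y)\not\models\phi$ or $(X,Y)\models\psi$, and (ii) $Y\models\phi\to\psi$ classically. A theory is satisfied iff each member is. A here-countermodel of $\Gamma$ is an $(X,Y)$ with $(X,Y)\not\models\Gamma$ and $Y\models\Gamma$; $E_s(\Gamma)$ is the set of HT-interpretations that are total HT-models of $\Gamma$ or here-countermodels of $\Gamma$. For $M=(X,Y)$ over $\mathcal L'$, $M|_{\mathcal L}=(X\cap\mathcal L,Y\cap\mathcal L)$; the restriction is totality preserving if $X\subsetneq Y$ implies $X\cap\mathcal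 L\subsetneq Y\cap\mathcal L$. *)

From Stdlib Require Import List Classical.
Import ListNotations.
Set Implicit Arguments.

Inductive formula (atom : Type) : Type :=
| Atom : atom -> formula atom
| Bot : formula atom
| And : formula atom -> formula atom -> formula atom
| Or : formula atom -> formula atom -> formula atom
| Imp : formula atom -> formula atom -> formula atom.
Arguments Bot {atom}.

Definition Neg {atom : Type} (p : formula atom) : formula atom := Imp p Bot.

Fixpoint atoms {atom : Type} (p : formula atom) : list atom :=
  match p with
  | Atom a => [a]
  | Bot => []
  | And p q | Or p q | Imp p q => atoms p ++ atoms q
  end.

Definition over {atom : Type} (L : atom -> Prop) (p : formula atom) : Prop :=
  forall a, In a (atoms p) -> L a.

Definition aset (atom : Type) := atom -> Prop.
Definition subset {atom : Type} (X Y : aset atom) : Prop := forall a, X a -> Y a.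
Definition ssubset {atom : Type} (X Y : aset atom) : Prop := subset X Y /\ ~ subset Y X.
Definition seteq {atom : Type} (X Y : aset atom) : Prop := subset X Y /\ subset Y X.

Fixpoint csat {atom : Type} (Y : aset atom) (p : formula atom) : Prop :=
  match p with
  | Atom a => Y a
  | Bot => False
  | And p q => csat Y p /\ csat Y q
  | Or p q => csat Y p \/ csat Y q
  | Imp p q => csat Y p -> csat Y q
  end.

Fixpoint htsat {atom : Type} (X Y : aset atom) (p : formula atom) : Prop :=
  match p with
  | Atom a => X a
  | Bot => False
  | And p q => htsat X Y p /\ htsat X Y q
  | Or p q => htsat X Y p \/ htsat X Y q
  | Imp p q => (~ htsat X Y p \/ htsat X Y q) /\ csat Y (Imp p q)
  end.

Definition htsatT {atom : Type} (X Y : aset atom) (G : list (formula atom)) : Prop :=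
  forall p, In p G -> htsat X Y p.
Definition csatT {atom : Type} (Y : aset atom) (G : list (formula atom)) : Prop :=
  forall p, In p G -> csat Y p.

Definition ht_interp {atom : Type} (L' : aset atom) (X Y : aset atom) : Prop :=
  subset X Y /\ subset Y L'.

Definition here_counter {atom : Type} (G : list (formula atom)) (X Y : aset atom) : Prop :=
  ~ htsatT X Y G /\ csatT Y G.

Definition in_Es {atom : Type} (G : list (formula atom)) (X Y : aset atom) : Prop :=
  (seteq X Y /\ htsatT X Y G) \/ here_counter G X Y.

Definition restr {atom : Type} (L : list atom) (X : aset atom) : aset atom :=
  fun a => X a /\ In a L.

Definition totality_preserving {atom : Type} (L : list atom) (X Y : aset atom) : Prop :=
  ssubset X Y -> ssubset (restr L X) (restr L Y).

(* n-ary connectives over a nonempty list (the empty case is never used) *)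
Fixpoint bigAnd {atom : Type} (l : list (formula atom)) : formula atom :=
  match l with
  | [] => Imp Bot Bot
  | [p] => p
  | p :: l' => And p (bigAnd l')
  end.
Fixpoint bigOr {atom : Type} (l : list (formula atom)) : formula atom :=
  match l with
  | [] => Bot
  | [p] => p
  | p :: l' => Or p (bigOr l')
  end.

Definition Gamma_phi {atom : Type} (L : list atom) (G : list (formula atom))
  (phi : formula atom) : list (formula atom) :=
  map (fun psi => Neg (Neg psi)) G ++
  map (fun a => Imp phi (Imp (Neg (Neg (Atom a))) (Atom a))) L.

Definition char_formula {atom : Type} (L : list atom) (G : list (formula atom)) : formula atom :=
  bigOr (map (fun phi => bigAnd (Gamma_phi L G phi)) G).

(* Write (X0, Y0) for the restriction of M = (X, Y) to L. Since Γ is over L,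
   M and (X0, Y0) satisfy the same members of Γ, in both the HT and the
   classical sense. Membership of M in E_s(Γ) amounts to: Y ⊨ Γ, and M is
   total as soon as M ⊨ Γ. On the other side, (X0, Y0) ⊨ ¬¬ψ iff Y ⊨ ψ, and
   (X0, Y0) ⊨ φ → (¬¬a → a) for all a ∈ L iff M ⊨ φ forces X0 = Y0; so the
   characteristic formula says: Y ⊨ Γ, and some φ ∈ Γ fails in M unless
   X0 = Y0. When X0 = Y0, M agrees on L with a total model of Γ and hence
   satisfies Γ, which is why totality preservation ties the two sides together. *)
From Stdlib Require Import List Classical.
Import ListNotations.

Section HTSemantics.
Variable atom : Type.
Implicit Types (X Y : aset atom) (p phi : formula atom) (L : list atom)
  (G : list (formula atom)).

Definition total_on L X Y : Prop := forall a, In a L -> Y a -> X a.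

Lemma sat_agree X Y X' Y' p :
  (forall a, In a (atoms p) -> (X a <-> X' a) /\ (Y a <-> Y' a)) ->
  (csat Y p <-> csat Y' p) /\ (htsat X Y p <-> htsat X' Y' p).
Proof.
  induction p as [a| |p IHp q IHq|p IHp q IHq|p IHp q IHq]; simpl; intro H;
    [destruct (H a (or_introl eq_refl)); tauto | tauto | ..].
  all: destruct IHp as [? ?]; [intros; apply H, in_or_app; auto|];
       destruct IHq as [? ?]; [intros; apply H, in_or_app; auto|]; tauto.
Qed.

Lemma sat_restr L X Y p : over (fun a => In a L) p ->
  (csat (restr L Y) p <-> csat Y p) /\
  (htsat (restr L X) (restr L Y) p <-> htsat X Y p).
Proof.
  intro Hp; apply sat_agree; intros a Ha.
  pose proof (Hp a Ha); unfold restr; tauto.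
Qed.

Lemma htsat_persist X Y p : subset X Y -> htsat X Y p -> csat Y p.
Proof.
  intro S; induction p; simpl; try tauto; apply S.
Qed.

Lemma htsat_total Y p : htsat Y Y p <-> csat Y p.
Proof.
  induction p as [| |p IHp q IHq|p IHp q IHq|p IHp q IHq]; simpl; try tauto.
Qed.

(* On L the restriction of M is total, so M agrees on the atoms of p with the
   total interpretation (Y0, Y0). *)
Lemma htsat_of_total_on L X Y p : subset X Y -> total_on L X Y ->
  over (fun a => In a L) p -> csat Y p -> htsat X Y p.
Proof.
  intros SXY TXY Hp Yp.
  apply (sat_restr L X Y p Hp), (sat_agree (restr L Y) (restr L Y)).
  - intros a _; unfold restr; split; [|tauto].
    split; [intros [? ?] | intros [? ?]]; split; auto.
  - apply htsat_total, (sat_restr L X Y p Hp), Yp.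
Qed.

Lemma total_on_restr L X Y :
  total_on L (restr L X) (restr L Y) <-> total_on L X Y.
Proof.
  unfold total_on, restr; split; intros T a Ha.
  - intro Ya; apply (T a Ha (conj Ya Ha)).
  - intros [Ya _]; split; auto.
Qed.

Lemma htsat_bigAnd X Y l : l <> nil ->
  (htsat X Y (bigAnd l) <-> forall p, In p l -> htsat X Y p).
Proof.
  induction l as [|p [|q l] IH]; intro Hn; [congruence| |].
  - simpl; split; [intros H r [<-|[]]; auto | auto].
  - change (htsat X Y (And p (bigAnd (q :: l))) <->
            forall r, In r (p :: q :: l) -> htsat X Y r).
    simpl htsat at 1; rewrite IH by congruence; simpl.
    split; [intros [? ?] r [<-|?]; auto | auto].
Qed.

Lemma htsat_bigOr X Y l :
  htsat X Y (bigOr l) <-> exists p, In p l /\ htsat X Y p.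
Proof.
  induction l as [|p [|q l] IH].
  - simpl; firstorder.
  - simpl; split; [eauto | intros [r [[<-|[]] ?]]; auto].
  - change (htsat X Y (Or p (bigOr (q :: l))) <->
            exists r, In r (p :: q :: l) /\ htsat X Y r).
    simpl htsat at 1; rewrite IH; simpl.
    split; [intros [?|[r [? ?]]]; eauto | intros [r [[<-|?] ?]]; eauto].
Qed.

Lemma htsat_negneg X Y p : subset X Y ->
  htsat X Y (Neg (Neg p)) <-> csat Y p.
Proof.
  intro S; pose proof (htsat_persist X Y p S); unfold Neg; simpl; tauto.
Qed.

Lemma htsat_imp_stable X Y phi a : subset X Y ->
  htsat X Y (Imp phi (Imp (Neg (Neg (Atom a))) (Atom a))) <->
  (htsat X Y phi -> Y a -> X a).
Proof.
  intro S; pose proof (htsat_negneg X Y (Atom a) S) as N; simpl in N |- *.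
  rewrite N; tauto.
Qed.

Lemma htsat_Gamma_phi L G X Y phi : subset X Y -> G <> nil ->
  htsat X Y (bigAnd (Gamma_phi L G phi)) <->
  csatT Y G /\ (htsat X Y phi -> total_on L X Y).
Proof.
  intros S Hn; rewrite htsat_bigAnd
    by (destruct G; [congruence | discriminate]).
  unfold Gamma_phi, csatT, total_on; split.
  - intro H; split.
    + intros p Hp; apply (htsat_negneg X Y p S), H, in_or_app; left.
      apply in_map_iff; eauto.
    + intros Hphi a Ha; apply (htsat_imp_stable X Y phi a S); auto.
      apply H, in_or_app; right; apply in_map_iff; eauto.
  - intros [HG Hphi] r Hr.
    apply in_app_or in Hr; destruct Hr as [Hr|Hr];
      apply in_map_iff in Hr; destruct Hr as [x [<- Hx]].
    + apply htsat_negneg; auto.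
    + apply htsat_imp_stable; auto.
Qed.

Lemma htsat_char_formula L G X Y : subset X Y -> G <> nil ->
  (forall p, In p G -> over (fun a => In a L) p) ->
  htsat (restr L X) (restr L Y) (char_formula L G) <->
  csatT Y G /\ exists phi, In phi G /\ (htsat X Y phi -> total_on L X Y).
Proof.
  intros S Hn Hov.
  assert (S0 : subset (restr L X) (restr L Y)).
  { intros a [? ?]; split; auto. }
  assert (HG : csatT (restr L Y) G <-> csatT Y G).
  { unfold csatT; split; intros H p Hp; apply (sat_restr L X Y p (Hov p Hp)); auto. }
  unfold char_formula; rewrite htsat_bigOr; split.
  - intros [f [Hf Hs]]; apply in_map_iff in Hf; destruct Hf as [phi [<- Hphi]].
    apply htsat_Gamma_phi in Hs; auto; destruct Hs as [HY Hphi'].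
    split; [apply HG; auto|].
    exists phi; split; auto; intro Xphi.
    apply total_on_restr, Hphi', (sat_restr L X Y phi (Hov phi Hphi)), Xphi.
  - intros [HY [phi [Hphi Hphi']]].
    exists (bigAnd (Gamma_phi L G phi)); split; [apply in_map_iff; eauto|].
    apply htsat_Gamma_phi; auto; split; [apply HG; auto|].
    intro Xphi; apply total_on_restr, Hphi', (sat_restr L X Y phi (Hov phi Hphi)), Xphi.
Qed.

Lemma in_Es_iff G X Y : subset X Y ->
  in_Es G X Y <-> csatT Y G /\ (htsatT X Y G -> subset Y X).
Proof.
  intro S; unfold in_Es, here_counter, seteq; split.
  - intros [[[_ YX] H] | [NH HY]]; split; try tauto.
    intros p Hp; apply (htsat_persist X Y p S), H, Hp.
  - tauto.
Qed.

Lemma totality_preserving_iff L X Y : subset X Y ->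
  totality_preserving L X Y <-> (total_on L X Y -> subset Y X).
Proof.
  intro S; unfold totality_preserving, ssubset, total_on; split.
  - intros TP T; apply NNPP; intro NYX.
    apply (proj2 (TP (conj S NYX))); intros a [Ya Ha]; split; auto.
  - intros H [_ NYX]; unfold restr; split.
    + intros a [? ?]; split; auto.
    + intro Sub; apply NYX, H; intros a Ha Ya; apply (Sub a (conj Ya Ha)).
Qed.

End HTSemantics.

Arguments total_on {atom}.

Theorem mainTheorem8 (atom : Type) (L : list atom) (L' : atom -> Prop)
  (G : list (formula atom)) (X Y : atom -> Prop) :
  G <> nil ->
  (forall p, In p G -> over (fun a => In a L) p) ->
  (forall a, In a L -> L' a) ->
  ht_interp L' X Y ->
  (in_Es G X Y <->
   (totality_preserving L X Y /\
    htsat (restr L X) (restr L Y) (char_formula L G))).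
Proof.
  intros Hn Hov _ [S _].
  rewrite in_Es_iff, totality_preserving_iff, htsat_char_formula by assumption.
  split.
  - intros [HY H].
    assert (TYX : total_on L X Y -> subset Y X).
    { intro T; apply H; intros p Hp; apply (htsat_of_total_on _ L); auto. }
    split; [exact TYX | split; [exact HY|]].
    destruct (classic (htsatT X Y G)) as [All | NAll].
    + destruct G as [|phi G']; [congruence|].
      exists phi; split; [left; auto|]; intros _ a _ Ya; apply (H All), Ya.
    + apply not_all_ex_not in NAll; destruct NAll as [p Hp].
      exists p; tauto.
  - intros [TYX [HY [phi [Hphi Hphi']]]].
    split; [exact HY|]; intro All; apply TYX, Hphi', All, Hphi.
Qed.
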